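(* Let $X,Y$ be proper, geodesically complete $\mathrm{CAT}(-\kappa)$ spaces with height functions based at non-isolated boundary points, and let $G$ act geometrically on $X\bowtie Y$ (metric from an admissible monotone norm) by isometries of the form $(x,y)\mapsto(g_Xx,g_Yy)$. Suppose $G=\langle H,t\mid tst^{-1}=f(s),s\in H\rangle$ is an ascending HNN extension with $H$ finitely generated, $H\subseteq\ker(h)$ and $h(t)>0$, where $h:G\to\mathbb{R}$ is the height change homomorphism. Fix $x_0\in X$ with $h_X(x_0)=0$ and $D>0$. Then there is $C>0$ such that for every $x_1\in X$ with $|h_X(x_1)|\le D$ there are points $x_1=p_0,p_1,\dots,p_n=x_0$ in $X$ with $d_X(p_i,p_{i+1})<C$ and $h_X(p_i)\le0$ for all $i$.
   Context: $X\bowtie Y=\{(x,y):h_X(x)=-h_Y(y)\}$ with height $h(x,y)=h_X(x)$; the height change of $g\in G$ is $h(g)=h_X(g_Xx)-h_X(x)$, independent of $x$. Admissible monotone norm $N$: $N(1,1)=1$, $N(a,b)\ge(|a|+|b|)/2$, non-decreasing in each coordinate on $[0,\infty)^2$; the metric on $X\bowtie Y$ is the corresponding length metric. *)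

From Stdlib Require Import Reals List.
Open Scope R_scope.

Record metric_space := MetricSpace {
  mpt :> Type;
  mdist : mpt -> mpt -> R;
  mdist_refl : forall x, mdist x x = 0;
  mdist_sep : forall x y, mdist x y = 0 -> x = y;
  mdist_sym : forall x y, mdist x y = mdist y x;
  mdist_tri : forall x y z, mdist x z <= mdist x y + mdist y z
}.
Arguments mdist {m} _ _.

Section MetricNotions.
Variable X : metric_space.

Definition seq_converges (u : nat -> X) (l : X) : Prop :=
  forall eps, 0 < eps -> exists N, forall n, (N <= n)%nat -> mdist (u n) l < eps.

(** proper: closed balls are compact (Heine--Borel, sequential form) *)
Definition proper_space : Prop :=
  forall (x : X) (r : R) (u : nat -> X), (forall n, mdist x (u n) <= r) ->
    exists (phi : nat -> nat) (l : X),
      (forall n, (phi n < phi (S n))%nat) /\ seq_converges (fun n => u (phi n)) l.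

Definition geodesic_segment (sigma : R -> X) (a : R) : Prop :=
  forall s t, 0 <= s <= a -> 0 <= t <= a -> mdist (sigma s) (sigma t) = Rabs (s - t).

Definition geodesic_space : Prop :=
  forall p q : X, exists sigma, geodesic_segment sigma (mdist p q) /\
    sigma 0 = p /\ sigma (mdist p q) = q.

Definition geodesically_complete : Prop :=
  forall (sigma : R -> X) (a : R), 0 < a -> geodesic_segment sigma a ->
    exists l : R -> X, (forall s t, mdist (l s) (l t) = Rabs (s - t)) /\
      (forall s, 0 <= s <= a -> l s = sigma s).

(** CAT(-kappa), kappa > 0: geodesic space in which, for every geodesic triangle
    [p,q,r] and every point x on a side [p,q] at distance s from p,
    d(r,x) <= d(rbar,xbar) in the comparison triangle in the model plane of
    curvature -kappa.  The comparison distance is given by the hyperbolic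
    Stewart formula (multiplied out by sinh(k a) > 0), k = sqrt kappa:
      cosh(k d(rbar,xbar)) sinh(k a)
        = sinh(k (a - s)) cosh(k d(p,r)) + sinh(k s) cosh(k d(q,r)),
    a = d(p,q).  (Bridson--Haefliger II.1.7(4) variant.) *)
Definition CAT_neg (kappa : R) : Prop :=
  geodesic_space /\
  forall (p q r : X) (sigma : R -> X),
    let a := mdist p q in
    let k := sqrt kappa in
    0 < a -> geodesic_segment sigma a -> sigma 0 = p -> sigma a = q ->
    forall s, 0 <= s <= a ->
      cosh (k * mdist r (sigma s)) * sinh (k * a)
        <= sinh (k * (a - s)) * cosh (k * mdist p r)
           + sinh (k * s) * cosh (k * mdist q r).

Definition geodesic_ray (g : R -> X) : Prop :=
  forall s t, 0 <= s -> 0 <= t -> mdist (g s) (g t) = Rabs (s - t).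

Definition asymptotic (g e : R -> X) : Prop :=
  exists B, forall t, 0 <= t -> mdist (g t) (e t) <= B.

(** the boundary point represented by g is not isolated in the visual boundary
    (cone topology, basic neighbourhoods U(g, r, eps) of rays issuing from the
    base point g 0, Bridson--Haefliger II.8.6) *)
Definition nonisolated_boundary_point (g : R -> X) : Prop :=
  forall r eps, 0 < r -> 0 < eps ->
    exists e : R -> X, geodesic_ray e /\ e 0 = g 0 /\ ~ asymptotic g e /\
      mdist (e r) (g r) < eps.

(** h is a height function based at the (non-isolated) boundary point [g]:
    h = minus the Busemann function of a ray g, h(x) = lim_{t->oo} (t - d(x, g t)). *)
Definition height_function (h : X -> R) : Prop :=
  exists g : R -> X, geodesic_ray g /\ nonisolated_boundary_point g /\
    forall x eps, 0 < eps -> exists T, forall t, T <= t ->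
      Rabs (t - mdist x (g t) - h x) < eps.

End MetricNotions.

Definition admissible_monotone_norm (N : R -> R -> R) : Prop :=
  (forall a b, 0 <= N a b) /\
  (forall a b, N a b = 0 -> a = 0 /\ b = 0) /\
  (forall l a b, N (l * a) (l * b) = Rabs l * N a b) /\
  (forall a b c e, N (a + c) (b + e) <= N a b + N c e) /\
  N 1 1 = 1 /\
  (forall a b, (Rabs a + Rabs b) / 2 <= N a b) /\
  (forall a a' b, 0 <= a -> a <= a' -> 0 <= b -> N a b <= N a' b) /\
  (forall a b b', 0 <= a -> 0 <= b -> b <= b' -> N a b <= N a b').

Section Horocyclic.
Variables (X Y : metric_space) (hX : X -> R) (hY : Y -> R) (N : R -> R -> R).

Definition inZ (z : X * Y) : Prop := hX (fst z) = - hY (snd z).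

Definition dN (z w : X * Y) : R := N (mdist (fst z) (fst w)) (mdist (snd z) (snd w)).

Definition Zpath (c : R -> X * Y) : Prop :=
  (forall s, 0 <= s <= 1 -> inZ (c s)) /\
  forall s, 0 <= s <= 1 -> forall eps, 0 < eps -> exists delta, 0 < delta /\
    forall s', 0 <= s' <= 1 -> Rabs (s' - s) < delta -> dN (c s) (c s') < eps.

Fixpoint psum (f : nat -> R) (n : nat) : R :=
  match n with O => 0 | S m => psum f m + f m end.

Definition length_le (c : R -> X * Y) (L : R) : Prop :=
  forall (n : nat) (tau : nat -> R), tau O = 0 -> tau n = 1 ->
    (forall i, (i < n)%nat -> tau i <= tau (S i)) ->
    psum (fun i => dN (c (tau i)) (c (tau (S i)))) n <= L.

(** d_Z(z, w) < r, for the induced length metric d_Z *)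
Definition Zball (z w : X * Y) (r : R) : Prop :=
  exists (c : R -> X * Y) (L : R),
    Zpath c /\ c 0 = z /\ c 1 = w /\ L < r /\ length_le c L.

Definition Zconverges (u : nat -> X * Y) (l : X * Y) : Prop :=
  forall eps, 0 < eps -> exists M, forall n, (M <= n)%nat -> Zball l (u n) eps.

Definition Zcompact (K : X * Y -> Prop) : Prop :=
  (forall z, K z -> inZ z) /\
  forall u : nat -> X * Y, (forall n, K (u n)) ->
    exists (phi : nat -> nat) (l : X * Y), K l /\
      (forall n, (phi n < phi (S n))%nat) /\ Zconverges (fun n => u (phi n)) l.

End Horocyclic.

Definition is_group (G : Type) (mul : G -> G -> G) (one : G) (inv : G -> G) : Prop :=
  (forall a b c, mul a (mul b c) = mul (mul a b) c) /\
  (forall a, mul one a = a) /\ (forall a, mul a one = a) /\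
  (forall a, mul (inv a) a = one) /\ (forall a, mul a (inv a) = one).

Definition is_subgroup (G : Type) (mul : G -> G -> G) (one : G) (inv : G -> G)
  (H : G -> Prop) : Prop :=
  H one /\ (forall a b, H a -> H b -> H (mul a b)) /\ (forall a, H a -> H (inv a)).

Definition finitely_generated (G : Type) (mul : G -> G -> G) (one : G) (inv : G -> G)
  (H : G -> Prop) : Prop :=
  exists l : list G, (forall s, In s l -> H s) /\
    forall P : G -> Prop, is_subgroup G mul one inv P -> (forall s, In s l -> P s) ->
      forall s, H s -> P s.

(** G = < H, t | t s t^-1 = f(s), s in H > is an ascending HNN extension:
    H is a subgroup of G, f : H -> H an injective homomorphism, t s t^-1 = f s
    in G, and (G, H ⊆ G, t) has the universal property of the presentation. *)
Definition ascending_HNN (G : Type) (mul : G -> G -> G) (one : G) (inv : G -> G)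
  (H : G -> Prop) (f : G -> G) (t : G) : Prop :=
  is_subgroup G mul one inv H /\
  (forall s, H s -> H (f s)) /\
  (forall s s', H s -> H s' -> f (mul s s') = mul (f s) (f s')) /\
  (forall s s', H s -> H s' -> f s = f s' -> s = s') /\
  (forall s, H s -> mul (mul t s) (inv t) = f s) /\
  forall (K : Type) (mulK : K -> K -> K) (oneK : K) (invK : K -> K),
    is_group K mulK oneK invK ->
    forall (phi : G -> K) (k : K),
      (forall s s', H s -> H s' -> phi (mul s s') = mulK (phi s) (phi s')) ->
      (forall s, H s -> mulK (mulK k (phi s)) (invK k) = phi (f s)) ->
      (exists Phi : G -> K, (forall a b, Phi (mul a b) = mulK (Phi a) (Phi b)) /\
          (forall s, H s -> Phi s = phi s) /\ Phi t = k) /\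
      (forall Phi1 Phi2 : G -> K,
          (forall a b, Phi1 (mul a b) = mulK (Phi1 a) (Phi1 b)) ->
          (forall a b, Phi2 (mul a b) = mulK (Phi2 a) (Phi2 b)) ->
          (forall s, H s -> Phi1 s = phi s) -> Phi1 t = k ->
          (forall s, H s -> Phi2 s = phi s) -> Phi2 t = k ->
          forall g, Phi1 g = Phi2 g).

Definition isometry (X : metric_space) (phi : X -> X) : Prop :=
  (forall x x', mdist (phi x) (phi x') = mdist x x') /\ (forall y, exists x, phi x = y).

Definition prod_act {G : Type} {X Y : Type} (gX : G -> X -> X) (gY : G -> Y -> Y)
  (g : G) (z : X * Y) : X * Y := (gX g (fst z), gY g (snd z)).

Definition product_isometric_action (X Y : metric_space) (hX : X -> R) (hY : Y -> R)
  (G : Type) (mul : G -> G -> G) (one : G)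
  (gX : G -> X -> X) (gY : G -> Y -> Y) : Prop :=
  (forall g, isometry X (gX g)) /\ (forall g, isometry Y (gY g)) /\
  (forall g z, inZ X Y hX hY z -> inZ X Y hX hY (prod_act gX gY g z)) /\
  (forall z, inZ X Y hX hY z -> prod_act gX gY one z = z) /\
  (forall g g' z, inZ X Y hX hY z ->
     prod_act gX gY (mul g g') z = prod_act gX gY g (prod_act gX gY g' z)).

(** geometric = properly discontinuous and cocompact, w.r.t. the length metric *)
Definition geometric_action (X Y : metric_space) (hX : X -> R) (hY : Y -> R)
  (N : R -> R -> R) (G : Type) (gX : G -> X -> X) (gY : G -> Y -> Y) : Prop :=
  (forall K, Zcompact X Y hX hY N K ->
     exists l : list G, forall g,
       (exists z, K z /\ K (prod_act gX gY g z)) -> In g l) /\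
  (exists K, Zcompact X Y hX hY N K /\
     forall z, inZ X Y hX hY z -> exists g k, K k /\ prod_act gX gY g k = z).

(** height change of g, h(g) = h_X(g_X x) - h_X(x) (independent of x) *)
Definition height_change {G : Type} {X : Type} (hX : X -> R) (gX : G -> X -> X)
  (g : G) (x : X) : R := hX (gX g x) - hX x.

(* Heights change along G by a homomorphism h : G -> R.  That g_X shifts every
   height by the same amount uses the 1-Lipschitz section of h_X along the
   geodesic line extending the defining ray backwards: through it g_X induces an
   isometry of R, and an isometry of R lying above the identity is a translation.

   Call g "joined to x0" if g x0 and x0 can be linked by a chain of points of
   height <= 0 with steps shorter than C, where C bounds the displacement of x0
   under t, t^-1 and a finite generating set of H.  For s in H and m >= 0 the
   element t^-m s is joined to x0: this is closed under products and inverses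
   because t^-m a t^m has height change 0 and thus maps chains to chains, and it
   holds for generators directly.  Right multiplication by t keeps an element
   joined as long as the height stays <= 0, so by the normal form t^-m s t^n of
   the ascending HNN extension every g with h(g) <= 0 is joined to x0.
   Finally, by cocompactness every x1 lies within a fixed distance of some
   a x0; if |h_X(x1)| <= D then a t^-J has h <= 0 for a fixed J, and x1 is a
   bounded step away from a x0 t^-J. *)
From Stdlib Require Import Reals List Lra Lia Relations ClassicalEpsilon
  FunctionalExtensionality Bool.
Open Scope R_scope.

Lemma Req_of_Rabs_lt_eps (a b : R) :
  (forall eps, 0 < eps -> Rabs (a - b) < eps) -> a = b.
Proof.
  intros close; apply Rle_antisym; apply Rle_plus_epsilon; intros eps eps_pos;
    specialize (close eps eps_pos); apply Rabs_def2 in close; lra.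
Qed.

Lemma sinh_pos (x : R) : 0 < x -> 0 < sinh x.
Proof.
  intros x_pos. unfold sinh.
  assert (exp (- x) < exp x) by (apply exp_increasing; lra). lra.
Qed.

Lemma cosh_lt_cosh (a b : R) : 0 <= a -> a < b -> cosh a < cosh b.
Proof.
  intros a_nonneg ab. unfold cosh. rewrite !exp_Ropp.
  set (x := exp a). set (y := exp b).
  assert (x_ge1 : 1 <= x) by (pose proof (exp_ineq1_le a); unfold x; lra).
  assert (xy : x < y) by (apply exp_increasing; exact ab).
  assert (inv_gap : / x - / y < y - x).
  { replace (/ x - / y) with ((y - x) * / (x * y)) by (field; lra).
    rewrite <- (Rmult_1_r (y - x)) at 2. apply Rmult_lt_compat_l; [lra |].
    rewrite <- Rinv_1. apply Rinv_1_lt_contravar; [lra | nra]. }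
  lra.
Qed.

(* Stewart's relation in the model plane for four points of a geodesic at
   positions -A, 0, al and T. *)
Lemma hyperbolic_collinear_identity (A al T : R) :
  cosh (A + al) * sinh T = sinh (T - al) * cosh A + sinh al * cosh (T + A).
Proof.
  unfold cosh, sinh, Rminus. rewrite !Ropp_plus_distr, !exp_plus, !exp_Ropp.
  pose proof (exp_pos A). pose proof (exp_pos al). pose proof (exp_pos T).
  field. lra.
Qed.

Lemma real_isometry_translation (phi : R -> R) :
  (forall u v, Rabs (phi u - phi v) = Rabs (u - v)) -> (forall u, u < phi u) ->
  forall u, phi u = u + phi 0.
Proof.
  intros iso above u. set (c := phi 0).
  assert (c_pos : 0 < c) by apply above.
  assert (shift_or_reflect : forall w, phi w = w + c \/ phi w = c - w).
  { intros w. pose proof (iso w 0) as e. fold c in e. rewrite Rminus_0_r in e.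
    unfold Rabs in e.
    destruct (Rcase_abs (phi w - c)), (Rcase_abs w); [left | right | right | left]; lra. }
  set (V := Rabs u + c + 1).
  pose proof (Rle_abs u) as u_le. pose proof (Rle_abs (- u)) as mu_le.
  rewrite Rabs_Ropp in mu_le.
  assert (phi_V : phi V = V + c).
  { destruct (shift_or_reflect V) as [| reflect]; [assumption |].
    pose proof (above V). unfold V in *. lra. }
  destruct (shift_or_reflect u) as [| reflect]; [assumption |].
  pose proof (iso V u) as e. rewrite phi_V, reflect in e.
  rewrite !Rabs_pos_eq in e by (unfold V; lra).
  lra.
Qed.

Lemma list_upper_bound {A : Type} (F : A -> R) (l : list A) :
  exists B, forall a, In a l -> F a < B.
Proof.
  induction l as [| a l [B IH]]; [exists 0; intros _ [] |].
  exists (Rmax (F a + 1) B). intros b [<- | b_l].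
  - apply Rlt_le_trans with (F a + 1); [lra | apply Rmax_l].
  - apply Rlt_le_trans with B; [auto | apply Rmax_r].
Qed.

Lemma strictly_increasing_ge (phi : nat -> nat) :
  (forall n, (phi n < phi (S n))%nat) -> forall n, (n <= phi n)%nat.
Proof. intros incr n. induction n as [| n IH]; [lia | specialize (incr n); lia]. Qed.

Lemma mdist_nonneg (M : metric_space) (x y : M) : 0 <= mdist x y.
Proof.
  pose proof (mdist_tri M x y x) as tri.
  rewrite mdist_refl, (mdist_sym M y x) in tri. lra.
Qed.

Section BusemannFunction.
Variables (M : metric_space) (h : M -> R) (g : R -> M).
Hypothesis g_ray : geodesic_ray M g.
Hypothesis h_limit : forall x eps, 0 < eps -> exists T, forall t, T <= t ->
  Rabs (t - mdist x (g t) - h x) < eps.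

Lemma height_of_eventually_const (x : M) (c T0 : R) :
  (forall t, T0 <= t -> t - mdist x (g t) = c) -> h x = c.
Proof.
  intros const. apply Req_of_Rabs_lt_eps. intros eps eps_pos.
  destruct (h_limit x eps eps_pos) as [T close].
  specialize (close (Rmax T T0) (Rmax_l _ _)).
  rewrite const in close by apply Rmax_r. now rewrite Rabs_minus_sym.
Qed.

Lemma height_lipschitz (x y : M) : Rabs (h x - h y) <= mdist x y.
Proof.
  apply Rle_plus_epsilon. intros eps eps_pos.
  destruct (h_limit x (eps / 2) ltac:(lra)) as [Tx close_x].
  destruct (h_limit y (eps / 2) ltac:(lra)) as [Ty close_y].
  set (t := Rmax Tx Ty).
  specialize (close_x t (Rmax_l _ _)). specialize (close_y t (Rmax_r _ _)).
  apply Rabs_def2 in close_x. apply Rabs_def2 in close_y.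
  pose proof (mdist_tri M x y (g t)). pose proof (mdist_tri M y x (g t)).
  pose proof (mdist_sym M x y).
  apply Rabs_le. lra.
Qed.

Lemma height_ray (u : R) : 0 <= u -> h (g u) = u.
Proof.
  intros u_nonneg. apply (height_of_eventually_const _ u u). intros t ut.
  rewrite g_ray, Rabs_left1 by lra. lra.
Qed.

Variable kappa : R.
Hypotheses (kappa_pos : 0 < kappa) (M_cat : CAT_neg M kappa).

(* The lower bound is the CAT(-kappa) comparison at g 1 on [g 0, g t] with apex
   l (1 + s); the comparison configuration is collinear, so Stewart's relation
   makes it tight. *)
Lemma ray_backward_extension_dist (l : R -> M) :
  (forall u v, mdist (l u) (l v) = Rabs (u - v)) -> l 0 = g 1 -> l 1 = g 0 ->
  forall s t, 0 <= s -> 1 <= t -> mdist (g t) (l (1 + s)) = t + s.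
Proof.
  intros l_line l0 l1 s t s_nonneg t_ge1.
  assert (g0t : mdist (g 0) (g t) = t) by (rewrite g_ray, Rabs_left1; lra).
  apply Rle_antisym.
  - pose proof (mdist_tri M (g t) (g 0) (l (1 + s))) as tri.
    rewrite (mdist_sym M (g t) (g 0)), g0t, <- l1, l_line, Rabs_left1 in tri by lra. lra.
  - destruct M_cat as [_ comparison].
    set (k := sqrt kappa). assert (k_pos : 0 < k) by (apply sqrt_lt_R0; lra).
    assert (segment : geodesic_segment M g (mdist (g 0) (g t))).
    { rewrite g0t. intros a b ha hb. apply g_ray; lra. }
    pose proof (comparison (g 0) (g t) (l (1 + s)) g ltac:(lra) segment eq_refl
                  ltac:(now rewrite g0t) 1) as cmp.
    simpl in cmp. fold k in cmp. rewrite g0t in cmp. specialize (cmp ltac:(lra)).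
    rewrite (mdist_sym M (l (1 + s)) (g 1)), <- l0, <- l1, !l_line in cmp.
    replace (Rabs (0 - (1 + s))) with (1 + s) in cmp by (rewrite Rabs_left1; lra).
    replace (Rabs (1 - (1 + s))) with s in cmp by (rewrite Rabs_left1; lra).
    rewrite Rmult_1_r in cmp.
    pose proof (hyperbolic_collinear_identity (k * s) k (k * t)) as stewart.
    replace (k * s + k) with (k * (1 + s)) in stewart by ring.
    replace (k * t - k) with (k * (t - 1)) in stewart by ring.
    replace (k * t + k * s) with (k * (t + s)) in stewart by ring.
    set (d := mdist (g t) (l (1 + s))) in *.
    assert (cosh_le : cosh (k * (t + s)) <= cosh (k * d)).
    { apply Rmult_le_reg_l with (sinh k); [now apply sinh_pos | lra]. }
    destruct (Rle_or_lt (t + s) d) as [| lt]; [assumption |].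
    assert (0 <= k * d) by (apply Rmult_le_pos; [lra | apply mdist_nonneg]).
    pose proof (cosh_lt_cosh (k * d) (k * (t + s))). nra.
Qed.

Hypothesis M_complete : geodesically_complete M.

Lemma height_section : exists L : R -> M,
  (forall u, h (L u) = u) /\ (forall u v, mdist (L u) (L v) <= Rabs (u - v)).
Proof.
  destruct (M_complete (fun v => g (1 - v)) 1 ltac:(lra)) as [l [l_line l_ext]].
  { intros u v hu hv. rewrite g_ray by lra. rewrite <- Rabs_Ropp. f_equal. ring. }
  assert (l1 : l 1 = g 0) by (rewrite l_ext by lra; f_equal; ring).
  assert (l0 : l 0 = g 1) by (rewrite l_ext by lra; f_equal; ring).
  assert (g0_l : forall w, w < 0 -> mdist (g 0) (l (1 - w)) = - w).
  { intros w w_neg. rewrite <- l1, l_line, Rabs_left1; lra. }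
  assert (g0_g : forall w, 0 <= w -> mdist (g 0) (g w) = w).
  { intros w w_nonneg. rewrite g_ray, Rabs_left1; lra. }
  exists (fun u => if Rle_dec 0 u then g u else l (1 - u)). split.
  - intros u. destruct (Rle_dec 0 u) as [u_nonneg | u_neg]; [now apply height_ray |].
    apply (height_of_eventually_const _ u 1). intros t t_ge1.
    replace (1 - u) with (1 + - u) by ring.
    rewrite mdist_sym, (ray_backward_extension_dist l l_line l0 l1) by lra. ring.
  - intros u v.
    destruct (Rle_dec 0 u) as [u_nonneg | u_neg], (Rle_dec 0 v) as [v_nonneg | v_neg].
    + rewrite g_ray by lra. lra.
    + pose proof (mdist_tri M (g u) (g 0) (l (1 - v))) as tri.
      rewrite (mdist_sym M (g u) (g 0)), g0_g, g0_l in tri by lra.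
      rewrite Rabs_right by lra. lra.
    + pose proof (mdist_tri M (l (1 - u)) (g 0) (g v)) as tri.
      rewrite (mdist_sym M (l (1 - u)) (g 0)), g0_g, g0_l in tri by lra.
      rewrite Rabs_left1 by lra. lra.
    + rewrite l_line. replace (1 - u - (1 - v)) with (- (u - v)) by ring.
      rewrite Rabs_Ropp. lra.
Qed.

End BusemannFunction.

Lemma height_function_section (M : metric_space) (h : M -> R) (kappa : R) :
  0 < kappa -> geodesically_complete M -> CAT_neg M kappa -> height_function M h ->
  (forall x y, Rabs (h x - h y) <= mdist x y) /\
  exists L : R -> M,
    (forall u, h (L u) = u) /\ (forall u v, mdist (L u) (L v) <= Rabs (u - v)).
Proof.
  intros kappa_pos complete cat [g [g_ray [_ limit]]]. split.
  - exact (height_lipschitz M h g limit).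
  - exact (height_section M h g g_ray limit kappa kappa_pos cat complete).
Qed.

Fixpoint expg {G : Type} (mul : G -> G -> G) (one : G) (x : G) (n : nat) : G :=
  match n with O => one | S k => mul x (expg mul one x k) end.

Section Group.
Context {G : Type} {mul : G -> G -> G} {one : G} {inv : G -> G}.
Hypothesis G_group : is_group G mul one inv.
Local Infix "**" := mul (at level 40, left associativity).
Local Notation "x ^+ n" := (expg mul one x n) (at level 29, left associativity).

Lemma mulgA a b c : a ** (b ** c) = a ** b ** c. Proof. apply G_group. Qed.
Lemma mul1g a : one ** a = a. Proof. apply G_group. Qed.
Lemma mulg1 a : a ** one = a. Proof. apply G_group. Qed.
Lemma mulVg a : inv a ** a = one. Proof. apply G_group. Qed.
Lemma mulgV a : a ** inv a = one. Proof. apply G_group. Qed.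

Lemma mulKg a b : inv a ** (a ** b) = b.
Proof. now rewrite mulgA, mulVg, mul1g. Qed.

Lemma mulKVg a b : a ** (inv a ** b) = b.
Proof. now rewrite mulgA, mulgV, mul1g. Qed.

Lemma invg_unique a b : a ** b = one -> b = inv a.
Proof. intros ab. now rewrite <- (mulKg a b), ab, mulg1. Qed.

Lemma invgK a : inv (inv a) = a.
Proof. symmetry. apply invg_unique, mulVg. Qed.

Lemma invMg a b : inv (a ** b) = inv b ** inv a.
Proof. symmetry. apply invg_unique. now rewrite <- mulgA, mulKVg, mulgV. Qed.

Lemma invg1 : inv one = one.
Proof. symmetry. apply invg_unique, mul1g. Qed.

Lemma expgD x m n : x ^+ (m + n) = x ^+ m ** x ^+ n.
Proof. induction m as [| m IH]; simpl; [now rewrite mul1g | now rewrite IH, mulgA]. Qed.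

Lemma expgSr x n : x ^+ S n = x ^+ n ** x.
Proof. rewrite <- Nat.add_1_r, expgD. simpl. now rewrite mulg1. Qed.

Lemma invg_expg x n : inv (x ^+ n) = inv x ^+ n.
Proof.
  induction n as [| n IH]; [apply invg1 |].
  rewrite expgSr, invMg, IH. reflexivity.
Qed.

Lemma expg_mul_expgV x m n :
  x ^+ n ** inv x ^+ m = x ^+ (n - m) ** inv x ^+ (m - n).
Proof.
  revert m; induction n as [| n IH]; intros m; simpl; [now rewrite Nat.sub_0_r |].
  destruct m as [| m]; simpl; [reflexivity |].
  rewrite <- IH. change (x ** x ^+ n) with (x ^+ S n).
  now rewrite expgSr, <- mulgA, mulKVg.
Qed.

Lemma expg_mul_expgV_diag x m : x ^+ m ** inv x ^+ m = one.
Proof. now rewrite expg_mul_expgV, Nat.sub_diag, mul1g. Qed.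

(* The unrestricted wreath product of Z/2 by G: G acts on the lamp
   configurations G -> bool by left translation. *)
Definition wreath : Type := G * (G -> bool).

Definition wr_mul (p q : wreath) : wreath :=
  (fst p ** fst q, fun x => xorb (snd p x) (snd q (inv (fst p) ** x))).

Definition wr_one : wreath := (one, fun _ => false).

Definition wr_inv (p : wreath) : wreath := (inv (fst p), fun x => snd p (fst p ** x)).

Lemma wreath_ext (p q : wreath) :
  fst p = fst q -> (forall x, snd p x = snd q x) -> p = q.
Proof.
  destruct p, q; simpl; intros -> same. f_equal. now apply functional_extensionality.
Qed.

Lemma wreath_group : is_group wreath wr_mul wr_one wr_inv.
Proof.
  repeat split.
  - intros [a u] [b v] [c w]. apply wreath_ext; simpl; [apply mulgA |].
    intros x. now rewrite xorb_assoc, invMg, mulgA.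
  - intros [a u]. apply wreath_ext; simpl; [apply mul1g |].
    intros x. now rewrite invg1, mul1g.
  - intros [a u]. apply wreath_ext; simpl; [apply mulg1 | intros x; apply xorb_false_r].
  - intros [a u]. apply wreath_ext; simpl; [apply mulVg |].
    intros x. rewrite invgK. apply xorb_nilpotent.
  - intros [a u]. apply wreath_ext; simpl; [apply mulgV |].
    intros x. rewrite mulKVg. apply xorb_nilpotent.
Qed.

Definition indicator (S : G -> Prop) (x : G) : bool :=
  if excluded_middle_informative (S x) then true else false.

Context {H : G -> Prop} {f : G -> G} {t : G}.
Hypothesis hnn : ascending_HNN G mul one inv H f t.

(* Both a |-> (a, 0) and a |-> (a, 1_S + a.1_S) are homomorphisms into the
   wreath product; they agree exactly on the stabiliser S of 1_S, so the
   uniqueness part of the universal property forces S to be everything. *)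
Lemma hnn_generated (S : G -> Prop) : is_subgroup G mul one inv S ->
  (forall s, H s -> S s) -> S t -> forall g, S g.
Proof.
  intros S_sub H_S t_S g. destruct S_sub as [S_one [S_mul S_inv]].
  destruct hnn as [_ [_ [_ [_ [conj universal]]]]].
  pose (plain := fun a : G => ((a, fun _ => false) : wreath)).
  pose (twisted := fun a : G =>
          ((a, fun x => xorb (indicator S x) (indicator S (inv a ** x))) : wreath)).
  assert (plain_hom : forall a b, plain (a ** b) = wr_mul (plain a) (plain b))
    by (intros a b; now apply wreath_ext).
  assert (twisted_hom : forall a b, twisted (a ** b) = wr_mul (twisted a) (twisted b)).
  { intros a b. apply wreath_ext; simpl; [reflexivity |]. intros x.
    rewrite invMg, <- mulgA.
    destruct (indicator S x), (indicator S (inv a ** x)),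
      (indicator S (inv b ** (inv a ** x))); reflexivity. }
  assert (agree : forall s, S s -> twisted s = plain s).
  { intros s s_S. apply wreath_ext; simpl; [reflexivity |]. intros x.
    assert (S x <-> S (inv s ** x)).
    { split; intros Sx.
      - apply S_mul; [now apply S_inv | exact Sx].
      - rewrite <- (mulKVg s x). now apply S_mul. }
    unfold indicator.
    destruct (excluded_middle_informative (S x)),
      (excluded_middle_informative (S (inv s ** x))); tauto. }
  destruct (universal wreath wr_mul wr_one wr_inv wreath_group plain (plain t))
    as [_ unique].
  { intros a b _ _. apply plain_hom. }
  { intros s s_H. rewrite <- (conj s s_H). now apply wreath_ext. }
  pose proof (unique twisted plain twisted_hom plain_hom
    (fun s s_H => agree s (H_S s s_H)) (agree t t_S) (fun _ _ => eq_refl) eq_refl g)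
    as lifts_eq.
  apply (f_equal (fun p => snd p one)) in lifts_eq. simpl in lifts_eq.
  rewrite mulg1 in lifts_eq. unfold indicator in lifts_eq.
  destruct (excluded_middle_informative (S one)); [| contradiction].
  destruct (excluded_middle_informative (S (inv g))) as [Sg |]; [| discriminate].
  rewrite <- (invgK g). now apply S_inv.
Qed.

Lemma H_iter k s : H s -> H (Nat.iter k f s).
Proof.
  intros s_H. induction k as [| k IH]; [exact s_H |]. simpl. now apply hnn.
Qed.

Lemma t_mul_H s : H s -> t ** s = f s ** t.
Proof.
  intros s_H. destruct hnn as [_ [_ [_ [_ [conj _]]]]].
  now rewrite <- (conj s s_H), <- mulgA, mulVg, mulg1.
Qed.

Lemma H_mul_tV s : H s -> s ** inv t = inv t ** f s.
Proof.
  intros s_H. destruct hnn as [_ [_ [_ [_ [conj _]]]]].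
  now rewrite <- (conj s s_H), !mulgA, mulVg, mul1g.
Qed.

Lemma expg_t_mul_H k s : H s -> t ^+ k ** s = Nat.iter k f s ** t ^+ k.
Proof.
  intros s_H. induction k as [| k IH]; simpl; [now rewrite mul1g, mulg1 |].
  rewrite <- mulgA, IH, mulgA, t_mul_H by now apply H_iter. now rewrite mulgA.
Qed.

Lemma H_mul_expg_tV k s : H s -> s ** inv t ^+ k = inv t ^+ k ** Nat.iter k f s.
Proof.
  intros s_H. induction k as [| k IH]; simpl; [now rewrite mul1g, mulg1 |].
  change (inv t ** inv t ^+ k) with (inv t ^+ S k). rewrite expgSr.
  rewrite mulgA, IH, <- mulgA, H_mul_tV by now apply H_iter. now rewrite mulgA.
Qed.

Definition hnn_normal (g : G) : Prop :=
  exists m n s, H s /\ g = inv t ^+ m ** s ** t ^+ n.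

Lemma hnn_normal_mul a b : hnn_normal a -> hnn_normal b -> hnn_normal (a ** b).
Proof.
  destruct hnn as [[_ [H_mul _]] _].
  intros [m [n [s [s_H ->]]]] [m' [n' [s' [s'_H ->]]]].
  replace (inv t ^+ m ** s ** t ^+ n ** (inv t ^+ m' ** s' ** t ^+ n'))
    with (inv t ^+ m ** s ** (t ^+ n ** inv t ^+ m') ** s' ** t ^+ n')
    by now rewrite !mulgA.
  rewrite expg_mul_expgV. destruct (Nat.le_gt_cases m' n).
  - replace (m' - n)%nat with 0%nat by lia. simpl. rewrite mulg1.
    exists m, (n - m' + n')%nat, (s ** Nat.iter (n - m') f s').
    split; [apply H_mul; [exact s_H | now apply H_iter] |].
    rewrite expgD, <- (mulgA (inv t ^+ m ** s)), expg_t_mul_H by exact s'_H.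
    now rewrite !mulgA.
  - replace (n - m')%nat with 0%nat by lia. simpl. rewrite mul1g.
    exists (m + (m' - n))%nat, n', (Nat.iter (m' - n) f s ** s').
    split; [apply H_mul; [now apply H_iter | exact s'_H] |].
    rewrite expgD, <- (mulgA (inv t ^+ m)), H_mul_expg_tV by exact s_H.
    now rewrite !mulgA.
Qed.

Lemma hnn_normal_all g : hnn_normal g.
Proof.
  destruct hnn as [[H_one [_ H_inv]] _].
  apply (hnn_generated hnn_normal); [split; [| split] | | ].
  - exists 0%nat, 0%nat, one. split; [exact H_one |]. simpl. now rewrite !mulg1.
  - exact hnn_normal_mul.
  - intros a [m [n [s [s_H ->]]]]. exists n, m, (inv s). split; [now apply H_inv |].
    now rewrite !invMg, !invg_expg, invgK, !mulgA.
  - intros s s_H. exists 0%nat, 0%nat, s. split; [exact s_H |]. simpl.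
    now rewrite mul1g, mulg1.
  - exists 0%nat, 1%nat, one. split; [exact H_one |]. simpl. now rewrite !mul1g, mulg1.
Qed.

End Group.

Section LowerChains.
Variables (X : metric_space) (hX : X -> R) (C : R).

Definition low_step (x y : X) : Prop := mdist x y < C /\ hX x <= 0 /\ hX y <= 0.

Definition below_chain : X -> X -> Prop := clos_refl_sym_trans X low_step.

Lemma below_chain_low_l x y : below_chain x y -> hX y <= 0 -> hX x <= 0.
Proof.
  intros chain y_low. apply clos_rst_rst1n in chain.
  destruct chain as [| w y' [step | step] _]; [exact y_low | apply step | apply step].
Qed.

Lemma below_chain_map (u : X -> X) :
  (forall p q, mdist (u p) (u q) = mdist p q) -> (forall p, hX (u p) = hX p) ->
  forall x y, below_chain x y -> below_chain (u x) (u y).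
Proof.
  intros u_dist u_height x y chain.
  induction chain as [a b step | a | a b _ IH | a b c _ IHab _ IHbc].
  - apply rst_step. unfold low_step in *. now rewrite u_dist, !u_height.
  - apply rst_refl.
  - now apply rst_sym.
  - now apply rst_trans with (u b).
Qed.

Lemma below_chain_path (x1 z y : X) (B : R) :
  C <= B -> mdist x1 z < B -> hX z <= 0 -> below_chain z y ->
  exists (n : nat) (p : nat -> X),
    p O = x1 /\ p n = y /\
    (forall i, (i < n)%nat -> mdist (p i) (p (S i)) < B) /\
    (forall i, (1 <= i <= n)%nat -> hX (p i) <= 0).
Proof.
  intros C_B near z_low chain. apply clos_rst_rst1n in chain. revert x1 near z_low.
  induction chain as [z | z w y step _ IH]; intros x1 near z_low.
  - exists 1%nat, (fun i => match i with O => x1 | _ => z end).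
    split; [reflexivity | split; [reflexivity | split]].
    + intros [| i] i_lt; [exact near | lia].
    + intros [| [| i]] range; [lia | exact z_low | lia].
  - assert (zw : mdist z w < C /\ hX w <= 0).
    { destruct step as [[zw [_ w_low]] | [wz [w_low _]]]; split; try assumption.
      now rewrite mdist_sym. }
    destruct (IH z ltac:(lra) (proj2 zw)) as [n [p [p0 [pn [p_steps p_low]]]]].
    exists (S n), (fun i => match i with O => x1 | S j => p j end).
    repeat split; [exact pn | |].
    + intros [| i] i_lt; [now rewrite p0 | apply p_steps; lia].
    + intros [| i] i_range; [lia |]. destruct i as [| i]; [now rewrite p0 | apply p_low; lia].
Qed.

End LowerChains.

Lemma Zball_fst_lt (X Y : metric_space) (hX : X -> R) (hY : Y -> R) (N : R -> R -> R)
  (z w : X * Y) (r : R) :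
  admissible_monotone_norm N -> Zball X Y hX hY N z w r -> mdist (fst z) (fst w) < 2 * r.
Proof.
  intros [_ [_ [_ [_ [_ [N_lower _]]]]]] [c [L [_ [c0 [c1 [L_r length]]]]]].
  pose proof (length 1%nat (fun i => match i with O => 0 | _ => 1 end) eq_refl eq_refl)
    as one_piece.
  simpl in one_piece. specialize (one_piece ltac:(intros [| i] _; lra)).
  rewrite c0, c1 in one_piece. unfold dN in one_piece.
  pose proof (N_lower (mdist (fst z) (fst w)) (mdist (snd z) (snd w))).
  pose proof (mdist_nonneg X (fst z) (fst w)). pose proof (mdist_nonneg Y (snd z) (snd w)).
  rewrite !Rabs_right in * by lra. lra.
Qed.

Lemma Zcompact_fst_bounded (X Y : metric_space) (hX : X -> R) (hY : Y -> R)
  (N : R -> R -> R) (K : X * Y -> Prop) (x0 : X) :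
  admissible_monotone_norm N -> Zcompact X Y hX hY N K ->
  exists R0, forall k, K k -> mdist (fst k) x0 <= R0.
Proof.
  intros N_adm [_ K_seq]. apply NNPP. intros unbounded.
  assert (far : forall n : nat, exists k, K k /\ INR n < mdist (fst k) x0).
  { intros n. apply NNPP. intros no_far. apply unbounded. exists (INR n).
    intros k k_K. apply Rnot_lt_le. intros lt. apply no_far. now exists k. }
  destruct (choice _ far) as [u u_far].
  destruct (K_seq u (fun n => proj1 (u_far n))) as [phi [l [_ [phi_incr conv]]]].
  destruct (conv 1 ltac:(lra)) as [M0 close].
  destruct (INR_unbounded (mdist (fst l) x0 + 2)) as [n0 n0_big].
  set (n := Nat.max M0 n0).
  pose proof (Zball_fst_lt X Y hX hY N _ _ _ N_adm (close n (Nat.le_max_l _ _))) as near.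
  pose proof (proj2 (u_far (phi n))) as u_far_n.
  assert (INR n0 <= INR (phi n)).
  { apply le_INR. pose proof (strictly_increasing_ge phi phi_incr n). unfold n in *. lia. }
  pose proof (mdist_tri X (fst (u (phi n))) (fst l) x0) as tri.
  rewrite (mdist_sym X (fst (u (phi n))) (fst l)) in tri. lra.
Qed.

Lemma orbit_coarsely_dense (X Y : metric_space) (hX : X -> R) (hY : Y -> R)
  (N : R -> R -> R) (G : Type) (gX : G -> X -> X) (gY : G -> Y -> Y) (x0 : X) :
  admissible_monotone_norm N -> geometric_action X Y hX hY N G gX gY ->
  (forall g x x', mdist (gX g x) (gX g x') = mdist x x') ->
  (forall u, exists y, hY y = u) ->
  exists R1, forall x1, exists a, mdist x1 (gX a x0) <= R1.
Proof.
  intros N_adm [_ [K [K_compact K_covers]]] act_dist hY_onto.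
  destruct (Zcompact_fst_bounded X Y hX hY N K x0 N_adm K_compact) as [R0 bounded].
  exists R0. intros x1. destruct (hY_onto (- hX x1)) as [y1 y1_height].
  destruct (K_covers (x1, y1)) as [a [k [k_K ak]]]; [unfold inZ; simpl; lra |].
  exists a. injection ak as <- _. rewrite act_dist. now apply bounded.
Qed.

(* The action is only prescribed on X ⋈ Y; since h_Y is onto, every x in X has
   a partner y with (x, y) in X ⋈ Y, so the first coordinates form an action on X. *)
Section ProductAction.
Variables (X Y : metric_space) (hX : X -> R) (hY : Y -> R) (G : Type)
  (mul : G -> G -> G) (one : G) (gX : G -> X -> X) (gY : G -> Y -> Y).
Hypothesis action : product_isometric_action X Y hX hY G mul one gX gY.
Hypothesis hY_onto : forall u, exists y, hY y = u.

Lemma exists_partner (x : X) : exists y, inZ X Y hX hY (x, y).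
Proof.
  destruct (hY_onto (- hX x)) as [y y_height]. exists y. unfold inZ; simpl; lra.
Qed.

Lemma actX_mul g g' x : gX (mul g g') x = gX g (gX g' x).
Proof.
  destruct (exists_partner x) as [y xy]. destruct action as [_ [_ [_ [_ act_mul]]]].
  specialize (act_mul g g' (x, y) xy). now injection act_mul.
Qed.

Lemma actX_one x : gX one x = x.
Proof.
  destruct (exists_partner x) as [y xy]. destruct action as [_ [_ [_ [act_one _]]]].
  specialize (act_one (x, y) xy). now injection act_one.
Qed.

Lemma actX_height g x x' : hX x = hX x' -> hX (gX g x) = hX (gX g x').
Proof.
  intros same. destruct (exists_partner x) as [y xy].
  assert (x'y : inZ X Y hX hY (x', y)) by (unfold inZ in *; simpl in *; lra).
  destruct action as [_ [_ [act_inZ _]]].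
  pose proof (act_inZ g _ xy) as gxy. pose proof (act_inZ g _ x'y) as gx'y.
  unfold inZ, prod_act in gxy, gx'y; simpl in gxy, gx'y. lra.
Qed.

End ProductAction.

Definition shifts_height {X G : Type} (hX : X -> R) (gX : G -> X -> X) (g : G) (c : R)
  : Prop := forall x, height_change hX gX g x = c.

Section Action.
Context {X : metric_space} {G : Type} {mul : G -> G -> G} {one : G} {inv : G -> G}.
Variables (hX : X -> R) (gX : G -> X -> X).
Hypothesis G_group : is_group G mul one inv.
Hypothesis act_mul : forall g g' x, gX (mul g g') x = gX g (gX g' x).
Hypothesis act_one : forall x, gX one x = x.
Hypothesis act_dist : forall g x x', mdist (gX g x) (gX g x') = mdist x x'.
Hypothesis act_height : forall g x x', hX x = hX x' -> hX (gX g x) = hX (gX g x').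
Hypothesis hX_lip : forall x y, Rabs (hX x - hX y) <= mdist x y.
Local Infix "**" := mul (at level 40, left associativity).
Local Notation "x ^+ n" := (expg mul one x n) (at level 29, left associativity).
Local Notation shifts := (shifts_height hX gX).

Lemma height_shift g c x : shifts g c -> hX (gX g x) = hX x + c.
Proof. intros shift. specialize (shift x). unfold height_change in shift. lra. Qed.

Lemma shifts_height_mul g g' a b : shifts g a -> shifts g' b -> shifts (g ** g') (a + b).
Proof.
  intros g_shift g'_shift x. unfold height_change.
  rewrite act_mul, (height_shift g a), (height_shift g' b) by assumption. ring.
Qed.

Lemma shifts_height_inv g a : shifts g a -> shifts (inv g) (- a).
Proof.
  intros g_shift x. pose proof (height_shift g a (gX (inv g) x) g_shift) as e.
  rewrite <- act_mul, (mulgV G_group), act_one in e. unfold height_change. lra.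
Qed.

Lemma shifts_height_expg g a n : shifts g a -> shifts (g ^+ n) (INR n * a).
Proof.
  intros g_shift. induction n as [| n IH]; intros x; unfold height_change.
  - simpl. rewrite act_one. ring.
  - rewrite (expgSr G_group), act_mul, (height_shift _ _ _ IH),
      (height_shift _ _ _ g_shift), S_INR.
    ring.
Qed.

Lemma orbit_dist_expg (x0 : X) (a : G) n :
  mdist (gX (a ^+ n) x0) x0 <= INR n * mdist (gX a x0) x0.
Proof.
  induction n as [| n IH].
  - simpl. rewrite act_one, mdist_refl. lra.
  - rewrite (expgSr G_group), act_mul, S_INR.
    pose proof (mdist_tri X (gX (a ^+ n) (gX a x0)) (gX (a ^+ n) x0) x0) as tri.
    rewrite act_dist in tri. lra.
Qed.

Section Raising.
Variable L : R -> X.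
Hypotheses (L_height : forall u, hX (L u) = u)
  (L_lip : forall u v, mdist (L u) (L v) <= Rabs (u - v)).

Lemma shifts_height_of_raising g :
  (forall x, 0 < height_change hX gX g x) -> exists c, 0 < c /\ shifts g c.
Proof.
  intros raises.
  pose (phi := fun u => hX (gX g (L u))).
  assert (induced : forall k x, hX (gX k x) = hX (gX k (L (hX x))))
    by (intros k x; apply act_height; now rewrite L_height).
  assert (lip : forall k u v, Rabs (hX (gX k (L u)) - hX (gX k (L v))) <= Rabs (u - v)).
  { intros k u v. eapply Rle_trans; [apply hX_lip |]. rewrite act_dist. apply L_lip. }
  assert (phi_iso : forall u v, Rabs (phi u - phi v) = Rabs (u - v)).
  { intros u v. apply Rle_antisym; [apply lip |].
    replace (Rabs (u - v))
      with (Rabs (hX (gX (inv g) (gX g (L u))) - hX (gX (inv g) (gX g (L v)))))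
      by now rewrite <- !act_mul, (mulVg G_group), !act_one, !L_height.
    rewrite (induced (inv g) (gX g (L u))), (induced (inv g) (gX g (L v))). apply lip. }
  assert (above : forall u, u < phi u).
  { intros u. specialize (raises (L u)). unfold height_change in raises.
    rewrite L_height in raises. unfold phi. lra. }
  exists (phi 0). split; [apply above |]. intros x. unfold height_change.
  rewrite induced. fold (phi (hX x)). rewrite (real_isometry_translation phi phi_iso above).
  ring.
Qed.

End Raising.

Section LowerComponent.
Context {H : G -> Prop}.
Variables (gens : list G) (t : G) (tau : R) (x0 : X) (C : R).
Hypothesis H_subgroup : is_subgroup G mul one inv H.
Hypothesis gens_H : forall s, In s gens -> H s.
Hypothesis gens_generate : forall P, is_subgroup G mul one inv P ->
  (forall s, In s gens -> P s) -> forall s, H s -> P s.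
Hypothesis H_level : forall s, H s -> shifts s 0.
Hypothesis t_shift : shifts t tau.
Hypothesis tau_pos : 0 < tau.
Hypothesis normal_form : forall g, exists m n s, H s /\ g = inv t ^+ m ** s ** t ^+ n.
Hypothesis x0_level : hX x0 = 0.
Hypothesis C_bounds : forall s, In s (t :: inv t :: gens) -> mdist (gX s x0) x0 < C.

Definition joins_x0 (g : G) : Prop := below_chain X hX C (gX g x0) x0.

Lemma height_at_x0 g c : shifts g c -> hX (gX g x0) = c.
Proof. intros g_shift. rewrite (height_shift _ _ _ g_shift). lra. Qed.

Lemma tV_shift : shifts (inv t) (- tau).
Proof. exact (shifts_height_inv _ _ t_shift). Qed.

Lemma joins_x0_step g s :
  joins_x0 g -> In s (t :: inv t :: gens) -> hX (gX (g ** s) x0) <= 0 -> joins_x0 (g ** s).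
Proof.
  intros g_joins s_gen low. apply rst_trans with (gX g x0); [apply rst_step | exact g_joins].
  split; [rewrite act_mul, act_dist; now apply C_bounds | split; [exact low |]].
  apply (below_chain_low_l X hX C _ x0 g_joins). lra.
Qed.

Lemma joins_x0_ascend g c : joins_x0 g -> shifts g c ->
  forall j, c + INR j * tau <= 0 -> joins_x0 (g ** t ^+ j).
Proof.
  intros g_joins g_shift j. induction j as [| j IH]; intros low.
  - simpl. now rewrite (mulg1 G_group).
  - assert (shift : shifts (g ** t ^+ j ** t) (c + INR (S j) * tau)).
    { rewrite <- (mulgA G_group), <- (expgSr G_group).
      apply shifts_height_mul; [exact g_shift | now apply shifts_height_expg]. }
    rewrite S_INR in low.
    rewrite (expgSr G_group), (mulgA G_group).
    apply joins_x0_step; [apply IH; lra | now left |].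
    rewrite (height_at_x0 _ _ shift), S_INR. lra.
Qed.

Lemma joins_x0_descend g c : joins_x0 g -> shifts g c -> c <= 0 ->
  forall j, joins_x0 (g ** inv t ^+ j).
Proof.
  intros g_joins g_shift c_nonpos j. induction j as [| j IH].
  - simpl. now rewrite (mulg1 G_group).
  - assert (shift : shifts (g ** inv t ^+ j ** inv t) (c + INR (S j) * - tau)).
    { rewrite <- (mulgA G_group), <- (expgSr G_group).
      apply shifts_height_mul; [exact g_shift | apply shifts_height_expg, tV_shift]. }
    rewrite (expgSr G_group), (mulgA G_group).
    apply joins_x0_step; [exact IH | now right; left |].
    rewrite (height_at_x0 _ _ shift). pose proof (pos_INR (S j)). nra.
Qed.

Lemma joins_x0_expgV m : joins_x0 (inv t ^+ m).
Proof.
  rewrite <- (mul1g G_group (inv t ^+ m)). apply (joins_x0_descend one 0); [| | lra].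
  - unfold joins_x0. rewrite act_one. apply rst_refl.
  - intros x. unfold height_change. rewrite act_one. ring.
Qed.

Lemma shifts_height_conj a m : H a -> shifts (inv t ^+ m ** a ** t ^+ m) 0.
Proof.
  intros a_H. replace 0 with (INR m * - tau + 0 + INR m * tau) by ring.
  apply shifts_height_mul; [apply shifts_height_mul |].
  - apply shifts_height_expg, tV_shift.
  - now apply H_level.
  - now apply shifts_height_expg.
Qed.

Lemma joins_x0_map u p : shifts u 0 -> below_chain X hX C p x0 ->
  below_chain X hX C (gX u p) (gX u x0).
Proof.
  intros u_shift. apply below_chain_map; [apply act_dist |].
  intros q. rewrite (height_shift _ _ _ u_shift). ring.
Qed.

Definition joins_x0_below (s : G) : Prop := forall m, joins_x0 (inv t ^+ m ** s).

Lemma joins_x0_below_mul a b : H a ->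
  joins_x0_below a -> joins_x0_below b -> joins_x0_below (a ** b).
Proof.
  intros a_H a_joins b_joins m.
  set (u := inv t ^+ m ** a ** t ^+ m).
  assert (u_joins : joins_x0 u).
  { apply (joins_x0_ascend _ (INR m * - tau + 0)); [apply a_joins | | lra].
    apply shifts_height_mul; [apply shifts_height_expg, tV_shift | now apply H_level]. }
  assert (u_eq : u ** (inv t ^+ m ** b) = inv t ^+ m ** (a ** b)).
  { unfold u. now rewrite <- !(mulgA G_group), (mulgA G_group (t ^+ m)),
      (expg_mul_expgV_diag G_group), (mul1g G_group). }
  unfold joins_x0. rewrite <- u_eq, act_mul.
  apply rst_trans with (gX u x0); [| exact u_joins].
  apply joins_x0_map; [now apply shifts_height_conj | apply b_joins].
Qed.

Lemma joins_x0_below_inv a : H a -> joins_x0_below a -> joins_x0_below (inv a).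
Proof.
  intros a_H a_joins m. destruct H_subgroup as [_ [_ H_inv]].
  set (u := inv t ^+ m ** inv a ** t ^+ m).
  assert (u_shift : shifts u 0) by (apply shifts_height_conj; now apply H_inv).
  assert (u_eq : u ** (inv t ^+ m ** a) = inv t ^+ m).
  { unfold u. now rewrite <- !(mulgA G_group), (mulgA G_group (t ^+ m)),
      (expg_mul_expgV_diag G_group), (mul1g G_group), (mulVg G_group), (mulg1 G_group). }
  assert (u_joins : joins_x0 u).
  { pose proof (joins_x0_map u _ u_shift (a_joins m)) as mapped.
    rewrite <- act_mul, u_eq in mapped.
    apply rst_trans with (gX (inv t ^+ m) x0); [now apply rst_sym | apply joins_x0_expgV]. }
  assert (u_eq' : u ** inv t ^+ m = inv t ^+ m ** inv a).
  { unfold u.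
    now rewrite <- !(mulgA G_group), (expg_mul_expgV_diag G_group), (mulg1 G_group). }
  rewrite <- u_eq'. exact (joins_x0_descend u 0 u_joins u_shift (Rle_refl 0) m).
Qed.

Lemma joins_x0_below_H s : H s -> joins_x0_below s.
Proof.
  intros s_H. destruct H_subgroup as [H_one [H_mul H_inv]].
  refine (proj2 (gens_generate (fun s => H s /\ joins_x0_below s) _ _ s s_H)).
  - split; [| split].
    + split; [exact H_one |]. intros m. rewrite (mulg1 G_group). apply joins_x0_expgV.
    + intros a b [a_H a_joins] [b_H b_joins].
      split; [now apply H_mul | now apply joins_x0_below_mul].
    + intros a [a_H a_joins]. split; [now apply H_inv | now apply joins_x0_below_inv].
  - intros r r_gen. split; [now apply gens_H |]. intros m.
    apply joins_x0_step; [apply joins_x0_expgV | now right; right |].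
    rewrite (height_at_x0 _ (INR m * - tau + 0)); [pose proof (pos_INR m); nra |].
    apply shifts_height_mul; [apply shifts_height_expg, tV_shift | now apply H_level, gens_H].
Qed.

Lemma shifts_height_normal m n s : H s ->
  shifts (inv t ^+ m ** s ** t ^+ n) (INR m * - tau + 0 + INR n * tau).
Proof.
  intros s_H. apply shifts_height_mul; [apply shifts_height_mul |].
  - apply shifts_height_expg, tV_shift.
  - now apply H_level.
  - now apply shifts_height_expg.
Qed.

Lemma joins_x0_of_nonraising g c : shifts g c -> c <= 0 -> joins_x0 g.
Proof.
  intros g_shift c_nonpos. destruct (normal_form g) as [m [n [s [s_H ->]]]].
  apply (joins_x0_ascend _ (INR m * - tau + 0)).
  - apply joins_x0_below_H, s_H.
  - apply shifts_height_mul; [apply shifts_height_expg, tV_shift | now apply H_level].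
  - pose proof (height_at_x0 _ _ g_shift) as c_eq.
    rewrite (height_at_x0 _ _ (shifts_height_normal m n s s_H)) in c_eq. lra.
Qed.

Lemma shifts_height_total a : exists c, shifts a c.
Proof.
  destruct (normal_form a) as [m [n [s [s_H ->]]]].
  eexists. exact (shifts_height_normal m n s s_H).
Qed.

Lemma nonraising_orbit_point_near (R1 D : R) :
  (forall x1, exists a, mdist x1 (gX a x0) <= R1) ->
  exists B, forall x1, Rabs (hX x1) <= D ->
    exists g c, shifts g c /\ c <= 0 /\ mdist x1 (gX g x0) <= B.
Proof.
  intros dense.
  destruct (INR_unbounded ((D + R1) / tau)) as [J J_big].
  assert (J_tau : D + R1 < INR J * tau).
  { apply (Rmult_lt_compat_r tau) in J_big; [| exact tau_pos].
    unfold Rdiv in J_big. rewrite Rmult_assoc, Rinv_l, Rmult_1_r in J_big by lra. lra. }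
  exists (R1 + INR J * mdist (gX (inv t) x0) x0). intros x1 x1_level.
  destruct (dense x1) as [a a_near]. destruct (shifts_height_total a) as [c a_shift].
  assert (c_bound : c <= D + R1).
  { rewrite <- (height_at_x0 _ _ a_shift). pose proof (hX_lip x1 (gX a x0)) as lip.
    pose proof (Rle_abs (hX (gX a x0) - hX x1)). rewrite Rabs_minus_sym in lip.
    pose proof (Rle_abs (hX x1)). lra. }
  exists (a ** inv t ^+ J), (c + INR J * - tau). split; [| split; [lra |]].
  - apply shifts_height_mul; [exact a_shift | apply shifts_height_expg, tV_shift].
  - rewrite act_mul.
    pose proof (mdist_tri X x1 (gX a x0) (gX a (gX (inv t ^+ J) x0))) as tri.
    rewrite act_dist, (mdist_sym X x0) in tri.
    pose proof (orbit_dist_expg x0 (inv t) J). lra.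
Qed.

Lemma lower_paths (R1 D : R) :
  (forall x1, exists a, mdist x1 (gX a x0) <= R1) ->
  exists B, 0 < B /\
    forall x1 : X, Rabs (hX x1) <= D ->
      exists (n : nat) (p : nat -> X),
        p O = x1 /\ p n = x0 /\
        (forall i, (i < n)%nat -> mdist (p i) (p (S i)) < B) /\
        (forall i, (1 <= i <= n)%nat -> hX (p i) <= 0).
Proof.
  intros dense. destruct (nonraising_orbit_point_near R1 D dense) as [B near].
  assert (C_pos : 0 < C).
  { pose proof (C_bounds t (or_introl eq_refl)).
    pose proof (mdist_nonneg X (gX t x0) x0). lra. }
  pose proof (Rmax_l 0 B). pose proof (Rmax_r 0 B).
  exists (C + Rmax 0 B + 1). split; [lra |]. intros x1 x1_level.
  destruct (near x1 x1_level) as [g [c [g_shift [c_nonpos g_near]]]].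
  apply (below_chain_path X hX C x1 (gX g x0) x0); [lra | lra | |].
  - now rewrite (height_at_x0 _ _ g_shift).
  - exact (joins_x0_of_nonraising g c g_shift c_nonpos).
Qed.

End LowerComponent.

End Action.

Theorem mainTheorem18
  (kappa : R) (X Y : metric_space) (hX : X -> R) (hY : Y -> R) (N : R -> R -> R)
  (G : Type) (mul : G -> G -> G) (one : G) (inv : G -> G)
  (H : G -> Prop) (f : G -> G) (t : G)
  (gX : G -> X -> X) (gY : G -> Y -> Y) (x0 : X) (D : R) :
  0 < kappa ->
  proper_space X -> geodesically_complete X -> CAT_neg X kappa ->
  proper_space Y -> geodesically_complete Y -> CAT_neg Y kappa ->
  height_function X hX -> height_function Y hY ->
  admissible_monotone_norm N ->
  is_group G mul one inv ->
  product_isometric_action X Y hX hY G mul one gX gY ->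
  geometric_action X Y hX hY N G gX gY ->
  ascending_HNN G mul one inv H f t ->
  finitely_generated G mul one inv H ->
  (forall s, H s -> forall x, height_change hX gX s x = 0) ->
  (forall x, 0 < height_change hX gX t x) ->
  hX x0 = 0 -> 0 < D ->
  exists C, 0 < C /\
    forall x1 : X, Rabs (hX x1) <= D ->
      exists (n : nat) (p : nat -> X),
        p O = x1 /\ p n = x0 /\
        (forall i, (i < n)%nat -> mdist (p i) (p (S i)) < C) /\
        (forall i, (1 <= i <= n)%nat -> hX (p i) <= 0).
Proof.
  intros kappa_pos _ X_complete X_cat _ Y_complete Y_cat X_height Y_height N_adm G_group
    action geometric hnn [gens [gens_H gens_generate]] H_level t_raises x0_level _.
  destruct (height_function_section X hX kappa kappa_pos X_complete X_cat X_height)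
    as [hX_lip [LX [LX_height LX_lip]]].
  destruct (height_function_section Y hY kappa kappa_pos Y_complete Y_cat Y_height)
    as [_ [LY [LY_height _]]].
  assert (hY_onto : forall u, exists y, hY y = u) by (intros u; now exists (LY u)).
  assert (act_dist : forall g x x', mdist (gX g x) (gX g x') = mdist x x')
    by (intros g; apply (proj1 (proj1 action g))).
  pose proof (actX_mul X Y hX hY G mul one gX gY action hY_onto) as act_mul.
  pose proof (actX_one X Y hX hY G mul one gX gY action hY_onto) as act_one.
  pose proof (actX_height X Y hX hY G mul one gX gY action hY_onto) as act_height.
  destruct (shifts_height_of_raising hX gX G_group act_mul act_one act_dist act_height
              hX_lip LX LX_height LX_lip t t_raises) as [tau [tau_pos t_shift]].
  destruct (list_upper_bound (fun s => mdist (gX s x0) x0) (t :: inv t :: gens))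
    as [C C_bounds].
  destruct (orbit_coarsely_dense X Y hX hY N G gX gY x0 N_adm geometric act_dist hY_onto)
    as [R1 dense].
  exact (lower_paths hX gX G_group act_mul act_one act_dist hX_lip gens t tau x0 C
           (proj1 hnn) gens_H gens_generate H_level t_shift tau_pos
           (hnn_normal_all G_group hnn) x0_level C_bounds R1 D dense).
Qed.
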